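(* Let $N\ge 1$ be an integer. Let $\phi_0,\phi_1,\phi_2,\dots$ be the orthonormal Hermite polynomials with respect to the weight $M(v)=\frac{1}{\sqrt{2\pi}}e^{-v^2/2}$, i.e. $\int_{\mathbb{R}}\phi_i(v)\phi_j(v)M(v)\,dv=\delta_{ij}$, with $\phi_0=1$, $\phi_1(v)=v$ and $v\phi_k(v)=\sqrt{k}\,\phi_{k-1}(v)+\sqrt{k+1}\,\phi_{k+1}(v)$. Let $0<z_1<\dots<z_N$ be the positive roots of $\phi_{2N}$, and set $v_j=-z_j$, $v_{N+j}=z_j$ for $j=1,\dots,N$. Let $V$ be the $2N\times 2N$ matrix with entries $V_{ij}=\phi_{i}(v_{j+1})$ for $i,j=0,\dots,2N-1$. Let $A$ be the symmetric tridiagonal $2N\times 2N$ matrix with zero diagonal and off-diagonal entries $A_{p-1,p}=A_{p,p-1}=\sqrt{p}$ for $p=1,\dots,2N-1$ (indices from $0$). Define the $N\times 2N$ matrix $B_1=\begin{pmatrix} I_N & -I_N\end{pmatrix}V^T$. Then, for every number of edges $n$, $y^TAy=0$ for every $y\in\ker(B_1)$.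
   Context: $I_N$ denotes the $N\times N$ identity matrix. The matrix $B_1$ encodes the boundary condition $B_1U(0,t)=0$ satisfied by the sum of the moment vectors over all $n$ edges at a network junction with the symmetric coupling condition; it does not depend on $n$. *)

From HB Require Import structures.
From mathcomp Require Import all_boot all_order all_algebra.
From mathcomp Require Import reals.
Set Implicit Arguments. Unset Strict Implicit. Unset Printing Implicit Defensive.
Import Order.TTheory GRing.Theory Num.Theory.
Local Open Scope ring_scope.

Section Hermite.
Variable R : realType.

(* herm_pair k = (phi_k, phi_(k+1)), defined by phi_0 = 1, phi_1 = X and the
   three-term recurrence  v phi_k = sqrt k phi_(k-1) + sqrt (k+1) phi_(k+1),
   i.e.  phi_(k+2) = (X phi_(k+1) - sqrt (k+1) phi_k) / sqrt (k+2). *)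
Fixpoint herm_pair (k : nat) : {poly R} * {poly R} :=
  match k with
  | 0%N => (1, 'X)
  | k'.+1 =>
      let: (a, b) := herm_pair k' in
      (b, (Num.sqrt (k'.+2)%:R)^-1 *: ('X * b - Num.sqrt (k'.+1)%:R *: a))
  end.

Definition hermite (k : nat) : {poly R} := (herm_pair k).1.

Definition nodes (N : nat) (z : 'I_N -> R) : 'I_(N + N) -> R :=
  fun k => match split k with inl j => - z j | inr j => z j end.

Definition Vmat (N : nat) (z : 'I_N -> R) : 'M[R]_(N + N) :=
  \matrix_(i, j) (hermite i).[nodes z j].

Definition Amat (N : nat) : 'M[R]_(N + N) :=
  \matrix_(i, j)
    (if j == i.+1 :> nat then Num.sqrt (j%:R)
     else if i == j.+1 :> nat then Num.sqrt (i%:R) else 0).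

Definition B1 (N : nat) (z : 'I_N -> R) : 'M[R]_(N, N + N) :=
  row_mx (1%:M) (- 1%:M) *m (Vmat z)^T.

End Hermite.

(** The nodes are the roots of phi_(2N), so each column of V is an eigenvector
of the Jacobi matrix A with eigenvalue the corresponding node: A V = V D with
D = diag(v_j). Since A is symmetric, V^T V commutes with D and is therefore
diagonal, with positive diagonal c (phi_0 = 1), so V is invertible. Writing
y = V x, the condition B_1 y = 0 reads c_j x_j = c_(N+j) x_(N+j); parity of
the phi_k and the symmetry of the nodes give c_j = c_(N+j), hence
x_j = x_(N+j). Finally y^T A y = sum_j c_j v_j x_j^2, whose terms cancel in
pairs because v_j = -v_(N+j). *)
From HB Require Import structures.
From mathcomp Require Import all_boot all_order all_algebra.
From mathcomp Require Import reals.
From mathcomp Require Import ring lra zify.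
Set Implicit Arguments.
Unset Strict Implicit.
Unset Printing Implicit Defensive.
Import Order.TTheory GRing.Theory Num.Theory.
Local Open Scope ring_scope.

Lemma ltn_homo_inj (T : eqType) (n : nat) (f : 'I_n -> T) (r : rel T) :
  irreflexive r -> {homo f : i j / (i < j)%N >-> r i j} -> injective f.
Proof.
move=> r_irr f_homo i j fij; case: (ltngtP i j) => [ij | ji | /val_inj //].
- by have := f_homo _ _ ij; rewrite fij r_irr.
- by have := f_homo _ _ ji; rewrite fij r_irr.
Qed.

Lemma sum_split_ord_oppr (V : zmodType) (m : nat) (f : 'I_(m + m) -> V) :
  (forall j, f (lshift m j) = - f (rshift m j)) -> \sum_i f i = 0.
Proof.
move=> fN; rewrite big_split_ord /=.
by under eq_bigr => j _ do rewrite fN; rewrite sumrN addNr.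
Qed.

Lemma mul_row1N_mx_eq0 (R : pzRingType) (m p : nat) (w : 'M[R]_(m + m, p)) :
  row_mx 1%:M (- 1%:M) *m w = 0 ->
  forall j k, w (lshift m j) k = w (rshift m j) k.
Proof.
rewrite -[w in _ *m w]vsubmxK mul_row_col mul1mx mulNmx mul1mx => /eqP.
rewrite subr_eq0 => /eqP uw_dw j k.
by have := congr1 (fun M : 'M_(m, p) => M j k) uw_dw; rewrite !mxE.
Qed.

Section GramMatrix.
Variable R : fieldType.

Lemma gram_diag_of_eigen (n : nat) (A V : 'M[R]_n) (d : 'I_n -> R) :
  A^T = A -> injective d -> A *m V = V *m diag_mx (\row_j d j) ->
  V^T *m V = diag_mx (\row_j (V^T *m V) j j).
Proof.
move=> A_sym d_inj AV; set C := V^T *m V.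
have CD_DC : C *m diag_mx (\row_j d j) = diag_mx (\row_j d j) *m C.
  rewrite -mulmxA -AV -[diag_mx _ in RHS]tr_diag_mx /C [RHS]mulmxA -trmx_mul -AV.
  by rewrite trmx_mul A_sym mulmxA.
clearbody C; apply/matrixP => i j; rewrite [RHS]mxE [X in X *+ _]mxE.
case: eqVneq => [-> | ij]; first by rewrite mulr1n.
have := congr1 (fun M : 'M_n => M i j) CD_DC; rewrite mul_mx_diag mul_diag_mx !mxE.
move=> /eqP; rewrite mulr0n eq_sym [d i * _]mulrC -subr_eq0 -mulrBr mulf_eq0 subr_eq0.
by case/orP => [/eqP // | /eqP /d_inj ij']; rewrite ij' eqxx in ij.
Qed.

Lemma gram_unitmx (n : nat) (V : 'M[R]_n) (c : 'rV[R]_n) :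
  V^T *m V = diag_mx c -> (forall j, c 0 j != 0) -> V \in unitmx.
Proof.
move=> VV c_neq0; have : V^T *m V \in unitmx.
  by rewrite VV unitmxE det_diag unitfE; apply/prodf_neq0 => j _.
by rewrite unitmx_mul => /andP[].
Qed.

Lemma quadratic_form_eigen (n : nat) (A V : 'M[R]_n) (d c : 'rV[R]_n)
    (x : 'cV[R]_n) :
  A *m V = V *m diag_mx d -> V^T *m V = diag_mx c ->
  (V *m x)^T *m A *m (V *m x) = (\sum_j c 0 j * d 0 j * x j 0 ^+ 2)%:M.
Proof.
move=> AV VV; rewrite trmx_mul -!mulmxA [A *m _]mulmxA AV !mulmxA.
rewrite -[x^T *m V^T *m V]mulmxA VV !mul_mx_diag.
apply/matrixP => i k; rewrite !ord1 !mxE; apply: eq_bigr => j _.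
by rewrite !mxE; ring.
Qed.

End GramMatrix.

Lemma gram_diag_gt0 (R : realFieldType) (m n : nat) (V : 'M[R]_(m, n)) i j :
  V i j != 0 -> 0 < (V^T *m V) j j.
Proof.
move=> Vij_neq0; rewrite mxE (bigD1 i) //= !mxE -expr2.
have Vij2_gt0 : 0 < V i j ^+ 2 by rewrite exprn_even_gt0 ?Vij_neq0 ?orbT.
apply: lt_le_trans Vij2_gt0 _.
by rewrite lerDl sumr_ge0 // => k _; rewrite !mxE -expr2 sqr_ge0.
Qed.

Section HermiteJacobi.
Variable R : realType.
Local Notation h := (hermite R).

Lemma hermite0 : h 0 = 1. Proof. by []. Qed.

Lemma hermite1 : h 1 = 'X. Proof. by []. Qed.

Lemma hermiteSS k :
  h k.+2 = (Num.sqrt k.+2%:R)^-1 *: ('X * h k.+1 - Num.sqrt k.+1%:R *: h k).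
Proof. by rewrite /hermite /=; case: (herm_pair R k). Qed.

Lemma hermite_rec k x :
  x * (h k).[x] = Num.sqrt k%:R * (h k.-1).[x] + Num.sqrt k.+1%:R * (h k.+1).[x].
Proof.
case: k => [|k]; first by rewrite sqrtr0 sqrtr1 hermite0 hermite1 !hornerE; ring.
have sqrt_neq0 : Num.sqrt k.+2%:R != 0 :> R by rewrite gt_eqF ?sqrtr_gt0.
rewrite hermiteSS hornerZ mulrA mulfV // mul1r.
by rewrite !(hornerD, hornerN, hornerZ, hornerM, hornerX) /=; ring.
Qed.

Lemma hermiteN k x : (h k).[- x] = (-1) ^+ k * (h k).[x].
Proof.
suff : (h k).[- x] = (-1) ^+ k * (h k).[x] /\
       (h k.+1).[- x] = (-1) ^+ k.+1 * (h k.+1).[x] by case.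
elim: k => [|k [IHk IHk1]]; first by rewrite hermite0 hermite1 !hornerE; split; ring.
split=> //; rewrite hermiteSS !(hornerZ, hornerD, hornerN, hornerM, hornerX).
by rewrite IHk IHk1 !exprS; ring.
Qed.

Lemma hermite_evenN m x : (h (m + m)).[- x] = (h (m + m)).[x].
Proof. by rewrite hermiteN -signr_odd addnn odd_double mul1r. Qed.

Definition jacobi_mx (m : nat) : 'M[R]_m :=
  \matrix_(i, j)
    (if j == i.+1 :> nat then Num.sqrt (j%:R)
     else if i == j.+1 :> nat then Num.sqrt (i%:R) else 0).

Lemma Amat_jacobi (N : nat) : Amat R N = jacobi_mx (N + N).
Proof. by []. Qed.

Lemma tr_jacobi_mx m : (jacobi_mx m)^T = jacobi_mx m.
Proof.
apply/matrixP => i j; rewrite !mxE.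
by case: eqP => [ij | _]; case: eqP => [ji | _] //; lia.
Qed.

(* At [i = 0] the second summand vanishes through [sqrt 0 = 0] rather than
   through its guard, since [0.-1 = 0]. *)
Lemma jacobi_mxE m (i k : 'I_m) :
  jacobi_mx m i k = (if k == i.+1 :> nat then Num.sqrt k%:R else 0)
                  + (if k == i.-1 :> nat then Num.sqrt i%:R else 0).
Proof.
rewrite mxE; case: i k => [[|i] _] [k _] /=.
  by rewrite sqrtr0 if_same addr0.
rewrite eqSS [i == k]eq_sym.
by case: eqP => [ki | _]; case: eqP => [ki' | _]; rewrite ?addr0 ?add0r //; lia.
Qed.

Lemma jacobi_hermite_row m (i : 'I_m) x : root (h m) x ->
  \sum_k jacobi_mx m i k * (h k).[x] = x * (h i).[x].
Proof.
move=> /eqP hm_x; rewrite hermite_rec.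
under eq_bigr => k _ do rewrite jacobi_mxE mulrDl !(fun_if (fun a => a * _)) !mul0r.
rewrite big_split /= -!big_mkcond.
rewrite (big_ord1_eq _ (fun k => Num.sqrt k%:R * (h k).[x])).
rewrite (big_ord1_eq _ (fun k => Num.sqrt i%:R * (h k).[x])).
rewrite (leq_ltn_trans (leq_pred i) (ltn_ord i)) addrC.
case: ltnP => // le_m_iS; have -> : i.+1 = m by have := ltn_ord i; lia.
by rewrite hm_x mulr0.
Qed.

Lemma jacobi_hermite_eigen m (d : 'I_m -> R) : (forall j, root (h m) (d j)) ->
  jacobi_mx m *m (\matrix_(i, j) (h i).[d j]) =
  (\matrix_(i, j) (h i).[d j]) *m diag_mx (\row_j d j).
Proof.
move=> d_root; rewrite mul_mx_diag; apply/matrixP => i j; rewrite mxE.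
under eq_bigr => k _ do rewrite [X in _ * X]mxE.
by rewrite jacobi_hermite_row // !mxE mulrC.
Qed.

End HermiteJacobi.

Section SymmetricNodes.
Variables (R : realType) (N : nat) (z : 'I_N -> R).

Lemma nodes_lshift j : nodes z (lshift N j) = - z j.
Proof. by rewrite /nodes (unsplitK (inl j)). Qed.

Lemma nodes_rshift j : nodes z (rshift N j) = z j.
Proof. by rewrite /nodes (unsplitK (inr j)). Qed.

Lemma nodes_root : (forall j, root (hermite R (N + N)) (z j)) ->
  forall j, root (hermite R (N + N)) (nodes z j).
Proof.
move=> z_root j; rewrite -(splitK j); case: split => k /=.
  by rewrite nodes_lshift rootE hermite_evenN -rootE.
by rewrite nodes_rshift.
Qed.

Lemma nodes_inj : (forall j, 0 < z j) -> injective z -> injective (nodes z).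
Proof.
move=> z_gt0 z_inj i j; rewrite -(splitK i) -(splitK j).
case: (split i) => a; case: (split j) => b;
  rewrite /= ?nodes_lshift ?nodes_rshift => e.
- by rewrite (z_inj _ _ (oppr_inj e)).
- by exfalso; have := z_gt0 a; have := z_gt0 b; lra.
- by exfalso; have := z_gt0 a; have := z_gt0 b; lra.
- by rewrite (z_inj _ _ e).
Qed.

Lemma Vmat_lshift k j : Vmat z k (lshift N j) = (-1) ^+ k * Vmat z k (rshift N j).
Proof. by rewrite !mxE nodes_lshift nodes_rshift hermiteN. Qed.

Lemma gram_Vmat_lshift j :
  ((Vmat z)^T *m Vmat z) (lshift N j) (lshift N j) =
  ((Vmat z)^T *m Vmat z) (rshift N j) (rshift N j).
Proof.
rewrite ![(_ *m _) _ _]mxE; apply: eq_bigr => k _; rewrite ![_^T _ _]mxE.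
by rewrite Vmat_lshift mulrACA -exprD -signr_odd addnn odd_double mul1r.
Qed.

End SymmetricNodes.

Theorem lemma4p2 (R : realType) (N : nat) (hN : (1 <= N)%N)
    (z : 'I_N -> R)
    (z_pos : forall j, 0 < z j)
    (z_incr : forall i j : 'I_N, (i < j)%N -> z i < z j)
    (z_root : forall j, root (hermite R (N + N)) (z j))
    (z_all : forall x : R, 0 < x -> root (hermite R (N + N)) x ->
                exists j, z j = x)
    (n : nat) :
  forall y : 'cV[R]_(N + N), B1 z *m y = 0 ->
    y^T *m Amat R N *m y = 0.
Proof.
(* Only distinctness of the nodes matters. *)
rewrite Amat_jacobi => y B1y.
set V := Vmat z; set C := V^T *m V; set c := \row_j C j j.
have z_inj : injective z := ltn_homo_inj (@ltxx _ R) z_incr.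
have AV : jacobi_mx R (N + N) *m V = V *m diag_mx (\row_j nodes z j).
  exact/jacobi_hermite_eigen/nodes_root.
have C_diag : C = diag_mx c.
  exact: gram_diag_of_eigen (tr_jacobi_mx _ _) (nodes_inj z_pos z_inj) AV.
have c_gt0 j : 0 < c 0 j.
  rewrite mxE; apply: (gram_diag_gt0 (i := Ordinal (ltn_addr N hN))).
  by rewrite mxE hermite0 hornerC oner_neq0.
have c_lr j : c 0 (lshift N j) = c 0 (rshift N j).
  by rewrite ![c 0 _]mxE; apply: gram_Vmat_lshift.
have /mulKVmx V_K : V \in unitmx by apply: gram_unitmx C_diag _ => j; rewrite gt_eqF.
clearbody c; move: B1y; rewrite -(V_K _ y); move: (invmx V *m y) => x B1y.
have x_lr j : x (lshift N j) 0 = x (rshift N j) 0.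
  move: B1y; rewrite /B1 -/V -mulmxA [V^T *m _]mulmxA -/C C_diag.
  move=> /mul_row1N_mx_eq0/(_ j 0); rewrite mul_diag_mx !mxE c_lr.
  by apply: mulfI; rewrite lt0r_neq0 ?c_gt0.
rewrite (quadratic_form_eigen _ AV C_diag) sum_split_ord_oppr ?raddf0 //.
by move=> j; rewrite !mxE nodes_lshift nodes_rshift c_lr x_lr; ring.
Qed.
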